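(* Assume $\mu>0$, $0<\lambda<\infty$, $\tau>0$, and let $\widetilde{\mathbf S'}=\frac1\lambda\mathbf M+\mathbf M(\tau\mathbf M+2\mu\mathbf N)^{-1}\mathbf N$. Then $\widetilde{\mathbf S'}$ is invertible and $$\widetilde{\mathbf S'}^{-1}=\frac{2\mu\lambda}{2\mu+\lambda}\mathbf M^{-1}+\tau\Big(\frac{\lambda}{2\mu+\lambda}\Big)^2\Big(\frac{\tau}{2\mu+\lambda}\mathbf M+\mathbf N\Big)^{-1}.$$
   Context: $\mathcal T_h$ is a conforming simplicial triangulation of a polygonal/polyhedral domain $\Omega\subset\mathbb R^d$ with mesh size $h$ and facet set $\mathcal E_h$; $\overline Q_h$ is the space of piecewise constant functions on $\mathcal T_h$ with a fixed basis, $\overline{\mathbf P}$ denoting the coefficient vector of $\overline p_h$ and $\langle\cdot,\cdot\rangle_2$ the Euclidean product. For $\overline q\in\overline Q_h$, $[\![\overline q]\!]$ is the jump across interior facets and $0$ on boundary facets. $\mathbf M$ and $\mathbf N$ are defined by $\langle\mathbf M\overline{\mathbf P},\overline{\mathbf Q}\rangle_2=(\overline p_h,\overline q_h)_{L^2(\Omega)}$ and $\langle\mathbf N\overline{\mathbf P},\overline{\mathbf Q}\rangle_2=\frac1h\sum_{F\in\mathcal E_h}\langle[\![\overline p_h]\!],[\![\overline q_h]\!]\rangle_{L^2(F)}$ for all $\overline p_h,\overline q_h\in\overline Q_h$. *)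

From HB Require Import structures.
From mathcomp Require Import all_boot all_order all_algebra.
Set Implicit Arguments. Unset Strict Implicit. Unset Printing Implicit Defensive.
Import Order.TTheory GRing.Theory Num.Theory.
Local Open Scope ring_scope.

(* Abstract combinatorial data of a mesh, sufficient to define Qbar_h, M, N.
   - elements of T_h: indices 'I_n, with volumes vol T = |T|;
   - facets E_h: a finite type E; each facet F has a first neighbouring
     element and an optional second one (None = boundary facet), and a
     measure meas F = |F|.
   - a piecewise constant function is given by its values on elements
     ('I_n -> R); the fixed basis of Qbar_h is given by an invertible matrix
     B whose column i holds the element values of the i-th basis function. *)

Section MeshForms.
Variables (R : realFieldType) (n : nat) (E : finType).
Variables (vol : 'I_n -> R) (nbr : E -> 'I_n * option 'I_n) (meas : E -> R).

Definition l2pc (p q : 'I_n -> R) : R := \sum_(T < n) vol T * p T * q T.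

Definition jump_pc (p : 'I_n -> R) (F : E) : R :=
  match nbr F with
  | (T1, Some T2) => p T1 - p T2
  | (_, None) => 0
  end.

Definition jumpform (h : R) (p q : 'I_n -> R) : R :=
  h^-1 * \sum_(F : E) meas F * jump_pc p F * jump_pc q F.

Definition basisfun (B : 'M[R]_n) (i : 'I_n) : 'I_n -> R := fun T => B T i.

(* <M P, Q>_2 = (p_h, q_h):  (M P)_i = sum_j M_ij P_j, tested with basis i *)
Definition massM (B : 'M[R]_n) : 'M[R]_n :=
  \matrix_(i, j) l2pc (basisfun B j) (basisfun B i).

Definition jumpN (h : R) (B : 'M[R]_n) : 'M[R]_n :=
  \matrix_(i, j) jumpform h (basisfun B j) (basisfun B i).

End MeshForms.

(** The mass matrix [M] is positive definite and the jump matrix [N] positive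
    semidefinite (both are Gram matrices with positive weights), so every
    combination [c M + d N] with [c > 0] and [d >= 0] is invertible.  The rest
    is algebra: with [P = tau M + 2 mu N] and [Q = tau/(2 mu + lambda) M + N]
    one has [lambda^-1 P + N = (2 mu + lambda)/lambda Q], hence
    [S = M P^-1 ((2 mu + lambda)/lambda Q)] and
    [S^-1 = lambda/(2 mu + lambda) Q^-1 P M^-1]; writing [P] as a combination
    of [Q] and [M] splits this into the two stated terms. *)

From HB Require Import structures.
From mathcomp Require Import all_boot all_order all_algebra ring.
Set Implicit Arguments. Unset Strict Implicit. Unset Printing Implicit Defensive.
Import Order.TTheory GRing.Theory Num.Theory.
Local Open Scope ring_scope.

Lemma mulmx1_invmx (R : comUnitRingType) n (A X : 'M[R]_n) :
  A *m X = 1%:M -> invmx A = X.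
Proof.
move=> AX1; have [uA _] := mulmx1_unit AX1.
by rewrite -[X]mul1mx -(mulVmx uA) -mulmxA AX1 mulmx1.
Qed.

Section SchurShift.
Variables (F : fieldType) (n : nat) (M N : 'M[F]_n) (s lambda tau : F).
Hypotheses (lambda_neq0 : lambda != 0) (s_lambda_neq0 : s + lambda != 0).

Local Notation P := (tau *: M + s *: N).
Local Notation Q := ((tau / (s + lambda)) *: M + N).
Local Notation a := ((s + lambda) / lambda).
Local Notation S := (lambda^-1 *: M + M *m invmx P *m N).

Hypotheses (uM : M \in unitmx) (uP : P \in unitmx) (uQ : Q \in unitmx).

Lemma schur_shift_factor : S = M *m invmx P *m (a *: Q).
Proof.
have -> : a *: Q = lambda^-1 *: P + N.
  by apply/matrixP => i j; rewrite !mxE; field; rewrite s_lambda_neq0 ?lambda_neq0.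
by rewrite mulmxDr -scalemxAr mulmxKV.
Qed.

Lemma schur_shift_mulmx_inv : S *m (a^-1 *: (invmx Q *m P *m invmx M)) = 1%:M.
Proof.
have a_neq0 : a != 0 by rewrite mulf_neq0 ?invr_eq0.
rewrite schur_shift_factor -!scalemxAr -!scalemxAl scalerA mulVf // scale1r.
by rewrite !mulmxA mulmxK // mulmxKV // mulmxV.
Qed.

Lemma schur_shift_invmx :
  S \in unitmx /\
  invmx S = (s * lambda / (s + lambda)) *: invmx M
            + (tau * (lambda / (s + lambda)) ^+ 2) *: invmx Q.
Proof.
have SX1 := schur_shift_mulmx_inv; split; first by case: (mulmx1_unit SX1).
rewrite (mulmx1_invmx SX1).
have -> : P = s *: Q + (tau * lambda / (s + lambda)) *: M.
  by apply/matrixP => i j; rewrite !mxE; field; rewrite s_lambda_neq0 ?lambda_neq0.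
rewrite mulmxDr mulmxDl -!scalemxAr -!scalemxAl.
rewrite mulVmx // mul1mx mulmxK // scalerDr !scalerA.
by congr (_ *: _ + _ *: _); field; rewrite s_lambda_neq0 lambda_neq0.
Qed.

End SchurShift.

Section QuadraticForms.
Variables (R : realFieldType) (n : nat).

Definition qform (A : 'M[R]_n) (v : 'rV[R]_n) : R := (v *m A *m v^T) 0 0.

Definition posdefmx (A : 'M[R]_n) : Prop := forall v, v != 0 -> 0 < qform A v.

Definition psdmx (A : 'M[R]_n) : Prop := forall v, 0 <= qform A v.

Lemma qform_comb (A B : 'M[R]_n) c d v :
  qform (c *: A + d *: B) v = c * qform A v + d * qform B v.
Proof. by rewrite /qform mulmxDr mulmxDl -!scalemxAr -!scalemxAl !mxE. Qed.

Lemma posdefmx_unit (A : 'M[R]_n) : posdefmx A -> A \in unitmx.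
Proof.
move=> A_pd; rewrite unitmxE unitfE; apply/negP => /det0P [v v_neq0 vA0].
by have := A_pd v v_neq0; rewrite /qform vA0 mul0mx mxE ltxx.
Qed.

Lemma posdefmx_comb (A B : 'M[R]_n) c d :
  posdefmx A -> psdmx B -> 0 < c -> 0 <= d -> posdefmx (c *: A + d *: B).
Proof.
move=> A_pd B_psd c_gt0 d_ge0 v v_neq0; rewrite qform_comb.
by apply: ltr_wpDr; rewrite ?mulr_ge0 ?mulr_gt0 ?A_pd.
Qed.

Lemma qform_gram (I : finType) (c : I -> R) (w : I -> 'I_n -> R) v :
  qform (\matrix_(i, j) \sum_k c k * w k j * w k i) v
  = \sum_k c k * (\sum_i v 0 i * w k i) ^+ 2.
Proof.
rewrite /qform mxE.
under eq_bigr => j _ do rewrite !mxE mulr_suml.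
under eq_bigr => j _ do under eq_bigr => i _ do rewrite !mxE mulr_sumr mulr_suml.
under [RHS]eq_bigr => k _ do rewrite expr2 mulr_suml mulr_sumr.
under [RHS]eq_bigr => k _ do under eq_bigr => i _ do rewrite !mulr_sumr.
rewrite exchange_big [RHS]exchange_big /=; apply: eq_bigr => i _.
rewrite exchange_big /=; apply: eq_bigr => k _.
by apply: eq_bigr => j _; ring.
Qed.

Lemma gram_psdmx (I : finType) (c : I -> R) (w : I -> 'I_n -> R) :
  (forall k, 0 <= c k) -> psdmx (\matrix_(i, j) \sum_k c k * w k j * w k i).
Proof.
move=> c_ge0 v; rewrite qform_gram.
by apply: sumr_ge0 => k _; rewrite mulr_ge0 ?sqr_ge0.
Qed.

End QuadraticForms.

Section MeshMatrices.
Variables (R : realFieldType) (n : nat) (E : finType).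
Variables (vol : 'I_n -> R) (nbr : E -> 'I_n * option 'I_n) (meas : E -> R).
Variables (h : R) (B : 'M[R]_n).

Lemma qform_massM v :
  qform (massM vol B) v = \sum_T vol T * ((v *m B^T) 0 T) ^+ 2.
Proof.
rewrite qform_gram; apply: eq_bigr => T _.
by congr (_ * _ ^+ 2); rewrite mxE; apply: eq_bigr => i _; rewrite mxE.
Qed.

Lemma massM_posdefmx :
  (forall T, 0 < vol T) -> B \in unitmx -> posdefmx (massM vol B).
Proof.
move=> vol_gt0 uB v v_neq0; rewrite qform_massM.
have /matrix0Pn [i [T vBT_neq0]] : v *m B^T != 0.
  by rewrite mulmx_free_eq0 // row_free_unit unitmx_tr.
rewrite (ord1 i) in vBT_neq0.
rewrite (bigD1 T) //=; apply: ltr_wpDr.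
  by apply: sumr_ge0 => U _; rewrite mulr_ge0 ?sqr_ge0 ?ltW.
by rewrite mulr_gt0 ?exprn_even_gt0.
Qed.

Lemma jumpN_psdmx : (forall F, 0 < meas F) -> 0 < h -> psdmx (jumpN nbr meas h B).
Proof.
move=> meas_gt0 h_gt0.
have -> : jumpN nbr meas h B = \matrix_(i, j) \sum_F (h^-1 * meas F)
            * jump_pc nbr (basisfun B j) F * jump_pc nbr (basisfun B i) F.
  apply/matrixP => i j; rewrite !mxE /jumpform mulr_sumr.
  by apply: eq_bigr => F _; rewrite !mulrA.
by apply: gram_psdmx => F; rewrite mulr_ge0 ?invr_ge0 ?ltW.
Qed.

End MeshMatrices.

Theorem theorem3p11 (R : realFieldType) (n : nat) (E : finType)
  (vol : 'I_n -> R) (nbr : E -> 'I_n * option 'I_n) (meas : E -> R)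
  (h : R) (B : 'M[R]_n) (mu lambda tau : R) :
  (forall T, 0 < vol T) ->
  (forall F, 0 < meas F) ->
  (forall F T1 T2, nbr F = (T1, Some T2) -> T1 != T2) ->
  0 < h ->
  B \in unitmx ->
  0 < mu -> 0 < lambda -> 0 < tau ->
  let M := massM vol B in
  let N := jumpN nbr meas h B in
  let S := lambda^-1 *: M + M *m invmx (tau *: M + (2 * mu) *: N) *m N in
  S \in unitmx /\
  invmx S = (2 * mu * lambda / (2 * mu + lambda)) *: invmx M
            + (tau * (lambda / (2 * mu + lambda)) ^+ 2)
              *: invmx ((tau / (2 * mu + lambda)) *: M + N).
Proof.
move=> vol_gt0 meas_gt0 _ h_gt0 uB mu_gt0 lambda_gt0 tau_gt0 M N S.
have M_pd : posdefmx M := massM_posdefmx vol_gt0 uB.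
have N_psd : psdmx N := jumpN_psdmx nbr B meas_gt0 h_gt0.
have s_lambda_gt0 : 0 < 2 * mu + lambda by rewrite addr_gt0 ?mulr_gt0.
apply: schur_shift_invmx.
- by rewrite gt_eqF.
- by rewrite gt_eqF.
- exact: posdefmx_unit.
- apply/posdefmx_unit/posdefmx_comb => //.
  by rewrite mulr_ge0 // ltW.
- have := posdefmx_comb M_pd N_psd (divr_gt0 tau_gt0 s_lambda_gt0) ler01.
  by rewrite scale1r => /posdefmx_unit.
Qed.
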